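(* For every $n\ge1$ and $r\in\mathbb{N}\cup\{0\}$, the only global smooth functions on the moduli spaces of $r$-jets of linear connections (symmetric or not) are the constants: $$\mathcal{C}^\infty(\mathfrak{C}^r_n)=\mathbb{R},\qquad\mathcal{C}^\infty(\widetilde{\mathfrak{C}}^r_n)=\mathbb{R}.$$ Equivalently, every smooth $\mathrm{Diff}_x$-invariant function on $J^r_x\mathcal{C}$ (resp. on $J^r_x\widetilde{\mathcal{C}}$) is constant.
   Context: $X$ is a smooth $n$-manifold, $x\in X$; $J^r_x\mathcal{C}$ (resp. $J^r_x\widetilde{\mathcal{C}}$) is the manifold of $r$-jets at $x$ of linear connections (resp. symmetric linear connections). The group $\mathrm{Diff}_x$ of germs of diffeomorphisms fixing $x$ acts by $(\tau\cdot\nabla)_D\bar D=\tau_*^{-1}(\nabla_{\tau_*D}\tau_*\bar D)$, through the Lie group $\mathrm{Diff}^{r+2}_x$ of $(r+2)$-jets. $\mathfrak{C}^r_n=J^r_x\mathcal{C}/\mathrm{Diff}^{r+2}_x$ and $\widetilde{\mathfrak{C}}^r_n=J^r_x\widetilde{\mathcal{C}}/\mathrm{Diff}^{r+2}_x$ are quotient ringed spaces: a function $h$ on an open $V$ of the quotient is smooth iff $h\circ\pi$ is smooth on $\pi^{-1}(V)$; hence $\mathcal{C}^\infty(\mathfrak{C}^r_n)=\mathcal{C}^\infty(J^r_x\mathcal{C})^{\mathrm{Diff}_x}$. These global smooth functions are called (scalar) differential invariants of order $\le r$. *)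

(* classical reals. Everything is expressed in local
   coordinates (X = R^n near x = 0). *)
From Stdlib Require Import Reals List Arith Bool.
Import ListNotations.
Open Scope R_scope.

(* a multi-index is a list of n exponents; a jet/polynomial in n variables
   is given by its Taylor coefficients: p alpha = coefficient of y^alpha *)
Definition poly := list nat -> R.

Fixpoint lnat_eqb (a b : list nat) : bool :=
  match a, b with
  | [], [] => true
  | x :: a', y :: b' => Nat.eqb x y && lnat_eqb a' b'
  | _, _ => false
  end.

Fixpoint multi (n d : nat) : list (list nat) :=
  match n with
  | O => [[]]
  | S n' => flat_map (fun a => map (cons a) (multi n' (d - a))) (seq 0 (S d))
  end.

Fixpoint madd (a b : list nat) : list nat :=
  match a, b with
  | x :: a', y :: b' => (x + y)%nat :: madd a' b'
  | _, _ => []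
  end.

Fixpoint incr (l : nat) (a : list nat) : list nat :=
  match a, l with
  | [], _ => []
  | x :: a', O => S x :: a'
  | x :: a', S l' => x :: incr l' a'
  end.

Definition unitidx (n l : nat) : list nat :=
  map (fun m => if Nat.eqb m l then 1%nat else 0%nat) (seq 0 n).

Definition lsum (s : list R) : R := fold_right Rplus 0 s.

Definition pone : poly := fun a => if forallb (Nat.eqb 0) a then 1 else 0.

(* product truncated at order r (meaningful on multi n r) *)
Definition pmul (n r : nat) (p q : poly) : poly := fun g =>
  lsum (map (fun ab => p (fst ab) * q (snd ab))
            (filter (fun ab => lnat_eqb (madd (fst ab) (snd ab)) g)
                    (list_prod (multi n r) (multi n r)))).

Fixpoint ppow (n r : nat) (p : poly) (m : nat) : poly :=
  match m with
  | O => pone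
  | S m' => pmul n r p (ppow n r p m')
  end.

Definition pderiv (l : nat) (p : poly) : poly := fun a =>
  INR (S (nth l a 0%nat)) * p (incr l a).

(* composition p o tau (tau = (tau 0, ..., tau (n-1)) with tau(0) = 0),
   truncated at order r *)
Definition pcomp (n r : nat) (p : poly) (tau : nat -> poly) : poly := fun g =>
  lsum (map (fun a =>
     p a * fold_right (pmul n r) pone
             (map (fun l => ppow n r (tau l) (nth l a 0%nat)) (seq 0 n)) g)
     (multi n r)).

(* Gamma k i j = (Taylor jet of) Christoffel symbol Gamma^k_{ij},
   where nabla_{d_i} d_j = sum_k Gamma^k_{ij} d_k *)
Definition conn := nat -> nat -> nat -> poly.

Definition coord := (nat * nat * nat * list nat)%type.

Definition getc (G : conn) (c : coord) : R :=
  match c with (k, i, j, a) => G k i j a end.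

Definition updc (G : conn) (c : coord) (t : R) : conn :=
  match c with (k, i, j, a) => fun k' i' j' a' =>
    if Nat.eqb k k' && Nat.eqb i i' && Nat.eqb j j' && lnat_eqb a a'
    then t else G k' i' j' a' end.

(* coordinates of J^r_x C (all linear connections) *)
Definition conn_coords (n r : nat) : list coord :=
  flat_map (fun k => flat_map (fun i => flat_map (fun j =>
     map (fun a => (k, i, j, a)) (multi n r)) (seq 0 n)) (seq 0 n)) (seq 0 n).

(* coordinates of J^r_x C~ (symmetric connections): Gamma^k_{ij}, i <= j *)
Definition sym_coords (n r : nat) : list coord :=
  filter (fun c => match c with (k, i, j, a) => Nat.leb i j end)
         (conn_coords n r).

Definition is_sym (G : conn) : Prop := forall k i j a, G k i j a = G k j i a.

(* F only depends on the coordinates in cs (i.e. F is a function on R^cs) *)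
Definition respects (cs : list coord) (F : conn -> R) : Prop :=
  forall G G', (forall c, In c cs -> getc G c = getc G' c) -> F G = F G'.

Definition contc (cs : list coord) (F : conn -> R) : Prop :=
  forall G eps, 0 < eps -> exists delta, 0 < delta /\
    forall G', (forall c, In c cs -> Rabs (getc G' c - getc G c) < delta) ->
      Rabs (F G' - F G) < eps.

Fixpoint Ck (cs : list coord) (k : nat) (F : conn -> R) : Prop :=
  respects cs F /\ contc cs F /\
  match k with
  | O => True
  | S k' => forall c, In c cs -> exists D : conn -> R, Ck cs k' D /\
       forall G, derivable_pt_lim (fun t => F (updc G c t)) (getc G c) (D G)
  end.

Definition smooth (cs : list coord) (F : conn -> R) : Prop :=
  forall k, Ck cs k F.

(* tau = (tau^0, ..., tau^{n-1}) : jet at 0 of a diffeomorphism germ fixing 0: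
   tau(0) = 0 and invertible linear part (d_l tau^k (0)) *)
Definition diff_jet (n : nat) (tau : nat -> poly) : Prop :=
  (forall k, (k < n)%nat -> tau k (repeat 0%nat n) = 0) /\
  exists M : nat -> nat -> R, forall k j, (k < n)%nat -> (j < n)%nat ->
    lsum (map (fun l => M k l * tau l (unitidx n j)) (seq 0 n))
    = if Nat.eqb k j then 1 else 0.

(* G' is the r-jet of tau . nabla, where nabla has r-jet G:
   (tau.nabla)_D D' = tau_*^{-1}(nabla_{tau_* D} tau_* D'), i.e. in coordinates
   sum_l d_l tau^k * G'^l_{ij} = sum_{a,b} G^k_{ab}(tau) d_i tau^a d_j tau^b
                                  + d_i d_j tau^k,
   as r-jets at 0. *)
Definition act_rel (n r : nat) (G : conn) (tau : nat -> poly) (G' : conn) : Prop :=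
  forall k i j, (k < n)%nat -> (i < n)%nat -> (j < n)%nat ->
  forall g, In g (multi n r) ->
    lsum (map (fun l => pmul n r (pderiv l (tau k)) (G' l i j) g) (seq 0 n))
    = lsum (map (fun ab => pmul n r (pmul n r (pcomp n r (G k (fst ab) (snd ab)) tau)
                                          (pderiv i (tau (fst ab))))
                                   (pderiv j (tau (snd ab))) g)
                (list_prod (seq 0 n) (seq 0 n)))
      + pderiv i (pderiv j (tau k)) g.

Definition invariant (n r : nat) (F : conn -> R) : Prop :=
  forall G tau G', diff_jet n tau -> act_rel n r G tau G' -> F G' = F G.

Definition sym_invariant (n r : nat) (F : conn -> R) : Prop :=
  forall G tau G', is_sym G -> diff_jet n tau -> act_rel n r G tau G' -> F G' = F G.

(* The homotheties y |-> lam y (lam <> 0) fix the origin, and in coordinates they act on a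
   jet of connection by multiplying the Taylor coefficient of y^a in Gamma^k_{ij} by
   lam^(1 + |a|).  Letting lam -> 0, every orbit accumulates at the flat connection
   Gamma = 0, which is symmetric; a continuous invariant function is constant along
   orbits, hence everywhere equal to its value at Gamma = 0.  Only continuity (C^0) of
   the invariant is used. *)
From Pilot Require Import Defs.
From Stdlib Require Import Reals List Arith Lia Lra.
Import ListNotations.
Open Scope R_scope.

Lemma lnat_eqb_spec a b : lnat_eqb a b = true <-> a = b.
Proof.
  revert b; induction a as [|x a IH]; intros [|y b]; simpl; split; intro H;
    try discriminate; auto.
  - apply andb_prop in H as [H1 H2]. apply Nat.eqb_eq in H1. apply IH in H2. subst; auto.
  - injection H as -> ->. apply andb_true_intro; split; [apply Nat.eqb_refl|apply IH; auto].
Qed.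

Lemma lnat_eqb_refl a : lnat_eqb a a = true.
Proof. apply lnat_eqb_spec; auto. Qed.

Lemma lnat_eqb_false a b : a <> b -> lnat_eqb a b = false.
Proof. intro H. destruct (lnat_eqb a b) eqn:E; auto. apply lnat_eqb_spec in E; tauto. Qed.

Lemma NoDup_list_prod {A B} (l : list A) (l' : list B) :
  NoDup l -> NoDup l' -> NoDup (list_prod l l').
Proof.
  intros Hl Hl'; induction Hl as [|x l Hx Hl IH]; simpl; [constructor|].
  apply NoDup_app; auto.
  - apply NoDup_map_NoDup_ForallPairs; auto. intros u v _ _ H; injection H; auto.
  - intros [u v] Ha Hb. apply in_map_iff in Ha as [w [Hw _]]. injection Hw as -> ->.
    apply in_prod_iff in Hb; tauto.
Qed.

Lemma lsum_single {A} (L : list A) (f : A -> R) x0 :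
  NoDup L -> (forall x, In x L -> x <> x0 -> f x = 0) ->
  (In x0 L -> lsum (map f L) = f x0) /\ (~ In x0 L -> lsum (map f L) = 0).
Proof.
  intros HN; induction HN as [|x l Hx Hl IH]; intros H; simpl.
  - split; [intros []|auto].
  - destruct (IH (fun y Hy => H y (or_intror Hy))) as [I1 I2].
    split.
    + intros [<-|Hin].
      * rewrite I2; [ring|auto].
      * rewrite (H x (or_introl eq_refl)); [rewrite I1; auto; ring|].
        intros ->; tauto.
    + intros Hn. rewrite (H x (or_introl eq_refl)); [rewrite I2; [ring|tauto]|].
      intros ->; tauto.
Qed.

Lemma lsum_delta_seq (f : nat -> R) k n : (k < n)%nat ->
  lsum (map (fun l => if (l =? k)%nat then f l else 0) (seq 0 n)) = f k.
Proof.
  intro H. destruct (lsum_single (seq 0 n) (fun l => if (l =? k)%nat then f l else 0) k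
    (seq_NoDup n 0)) as [I1 _].
  { intros x _ Hx. destruct (Nat.eqb_spec x k); tauto. }
  rewrite I1, Nat.eqb_refl; auto. apply in_seq; lia.
Qed.

Lemma natsum_delta (f : nat -> nat) i s len :
  fold_right plus 0%nat (map (fun l => if (i =? l)%nat then f l else 0%nat) (seq s len))
  = if ((s <=? i) && (i <? s + len))%bool then f i else 0%nat.
Proof.
  revert s; induction len; intros s; simpl.
  - destruct (Nat.leb_spec s i), (Nat.ltb_spec i (s + 0)); simpl; auto; lia.
  - rewrite IHlen.
    destruct (Nat.eqb_spec i s), (Nat.leb_spec s i), (Nat.ltb_spec i (s + S len)),
      (Nat.leb_spec (S s) i), (Nat.ltb_spec i (S s + len)); simpl; subst; lia.
Qed.

(** * Multi-indices *)

Definition msum (a : list nat) : nat := fold_right plus 0%nat a.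

Definition mzero (n : nat) : list nat := repeat 0%nat n.

Lemma in_multi n d a : In a (multi n d) <-> length a = n /\ (msum a <= d)%nat.
Proof.
  revert d a; induction n as [|n IH]; intros d a.
  - simpl; split.
    + intros [<-|[]]; simpl; lia.
    + intros [H1 H2]; destruct a; [auto|simpl in H1; discriminate].
  - unfold multi; fold multi. rewrite in_flat_map. split.
    + intros [x [Hx Ha]]. apply in_map_iff in Ha as [a' [<- Ha']].
      apply in_seq in Hx. apply IH in Ha' as [H1 H2]. simpl; lia.
    + intros [H1 H2]. destruct a as [|x a']; simpl in H1; [discriminate|].
      exists x; split; [apply in_seq; simpl in H2; lia|].
      apply in_map. apply IH. simpl in H2; lia.
Qed.

Lemma NoDup_multi n d : NoDup (multi n d).
Proof.
  revert d; induction n as [|n IH]; intros d.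
  - simpl; constructor; [simpl; auto|constructor].
  - unfold multi; fold multi. generalize (seq_NoDup (S d) 0). generalize (seq 0 (S d)).
    intros l Hl; induction Hl as [|x l Hx Hl IHl]; simpl; [constructor|].
    apply NoDup_app.
    + apply NoDup_map_NoDup_ForallPairs; [intros u v _ _ H; injection H; auto|apply IH].
    + apply IHl.
    + intros a Ha Hb. apply in_map_iff in Ha as [u [<- _]].
      apply in_flat_map in Hb as [y [Hy Hb]]. apply in_map_iff in Hb as [w [Hw _]].
      injection Hw as ->. tauto.
Qed.

Lemma length_madd a b : length (madd a b) = Nat.min (length a) (length b).
Proof. revert b; induction a; intros [|y b]; simpl; auto. Qed.

Lemma nth_madd a b i : length a = length b ->
  nth i (madd a b) 0%nat = (nth i a 0 + nth i b 0)%nat.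
Proof.
  revert b i; induction a as [|x a IH]; intros [|y b] i H; simpl in *; try discriminate.
  - destruct i; auto.
  - destruct i; auto.
Qed.

Lemma msum_madd a b : length a = length b -> msum (madd a b) = (msum a + msum b)%nat.
Proof.
  revert b; induction a as [|x a IH]; intros [|y b] H; simpl in *; try discriminate; auto.
  rewrite IH; lia.
Qed.

Lemma length_mzero n : length (mzero n) = n.
Proof. apply repeat_length. Qed.

Lemma nth_mzero n i : nth i (mzero n) 0%nat = 0%nat.
Proof. unfold mzero. revert i; induction n; intros [|i]; simpl; auto. Qed.

Lemma msum_mzero n : msum (mzero n) = 0%nat.
Proof. unfold mzero; induction n; simpl; auto. Qed.

Lemma mzero_in_multi n r : In (mzero n) (multi n r).
Proof. apply in_multi. rewrite length_mzero, msum_mzero; split; auto; lia. Qed.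

Lemma madd0m a : madd (mzero (length a)) a = a.
Proof. induction a; simpl; auto. f_equal; auto. Qed.

Lemma maddm0 a : madd a (mzero (length a)) = a.
Proof. unfold mzero in *. induction a; simpl; auto. rewrite IHa. f_equal; lia. Qed.

Lemma pone_mzero n a : length a = n -> pone a = if lnat_eqb a (mzero n) then 1 else 0.
Proof.
  intros <-. unfold pone, mzero. induction a as [|x a IH]; simpl; auto.
  destruct x; simpl; auto.
Qed.

Lemma length_unitidx n l : length (unitidx n l) = n.
Proof. unfold unitidx; rewrite length_map, length_seq; auto. Qed.

Lemma nth_map_seq (f : nat -> nat) n i :
  nth i (map f (seq 0 n)) 0%nat = if (i <? n)%nat then f i else 0%nat.
Proof.
  destruct (Nat.ltb_spec i n).
  - rewrite nth_indep with (d' := f 0%nat) by (rewrite length_map, length_seq; lia).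
    rewrite map_nth, seq_nth; auto.
  - apply nth_overflow. rewrite length_map, length_seq; lia.
Qed.

Lemma nth_unitidx n l i :
  nth i (unitidx n l) 0%nat = if (i <? n)%nat then (if (i =? l) then 1 else 0)%nat else 0%nat.
Proof. apply nth_map_seq. Qed.

Lemma msum_unitidx n l : (l < n)%nat -> msum (unitidx n l) = 1%nat.
Proof.
  intro H. unfold msum, unitidx.
  rewrite (map_ext _ (fun m => if (l =? m)%nat then 1%nat else 0%nat))
    by (intro m; rewrite Nat.eqb_sym; reflexivity).
  rewrite natsum_delta. destruct (Nat.leb_spec 0 l), (Nat.ltb_spec l (0 + n)); simpl; lia.
Qed.

Lemma length_incr l a : length (incr l a) = length a.
Proof. revert l; induction a; intros [|l]; simpl; auto. Qed.

Lemma nth_incr l a i : (l < length a)%nat ->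
  nth i (incr l a) 0%nat = (nth i a 0 + if (i =? l) then 1 else 0)%nat.
Proof.
  revert l i; induction a as [|x a IH]; intros l i H; simpl in *; [lia|].
  destruct l, i; simpl; try lia; auto. apply IH; lia.
Qed.

Lemma msum_incr l a : (l < length a)%nat -> msum (incr l a) = S (msum a).
Proof.
  revert l; induction a as [|x a IH]; intros l H; simpl in *; [lia|].
  destruct l; simpl; auto. rewrite IH; lia.
Qed.

Lemma incr_mzero n l : (l < n)%nat -> incr l (mzero n) = unitidx n l.
Proof.
  intro H. apply nth_ext with 0%nat 0%nat;
    [rewrite length_incr, length_mzero, length_unitidx; auto|].
  intros i _. destruct (Nat.ltb_spec i n).
  - rewrite nth_incr, nth_mzero, nth_unitidx by (rewrite length_mzero; auto).
    destruct (Nat.ltb_spec i n); [|lia]. destruct (Nat.eqb_spec i l); lia.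
  - rewrite !nth_overflow; auto; [rewrite length_unitidx|rewrite length_incr, length_mzero]; lia.
Qed.

Lemma incr_eq_unitidx n l k a : length a = n -> (l < n)%nat -> (k < n)%nat ->
  incr l a = unitidx n k -> a = mzero n /\ l = k.
Proof.
  intros Ha Hl Hk E.
  assert (Hn : forall i, nth i (incr l a) 0%nat = nth i (unitidx n k) 0%nat) by (rewrite E; auto).
  assert (Hlk : l = k).
  { specialize (Hn l). rewrite nth_incr, nth_unitidx in Hn by lia.
    rewrite Nat.eqb_refl in Hn. destruct (Nat.ltb_spec l n); [|lia].
    destruct (Nat.eqb_spec l k); lia. }
  subst k. split; auto.
  apply nth_ext with 0%nat 0%nat; [rewrite length_mzero; auto|]. intros i _. rewrite nth_mzero.
  specialize (Hn i). rewrite nth_incr, nth_unitidx in Hn by lia.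
  destruct (Nat.eqb_spec i l), (Nat.ltb_spec i n); lia.
Qed.

Fixpoint mscale (n m : nat) (e : list nat) : list nat :=
  match m with O => mzero n | S m' => madd e (mscale n m' e) end.

Lemma length_mscale n m e : length e = n -> length (mscale n m e) = n.
Proof.
  intro H; induction m; simpl; [apply length_mzero|]. rewrite length_madd, IHm, H; lia.
Qed.

Lemma nth_mscale n m e i : length e = n -> nth i (mscale n m e) 0%nat = (m * nth i e 0)%nat.
Proof.
  intro H; induction m; simpl; [apply nth_mzero|].
  rewrite nth_madd by (rewrite length_mscale; auto). rewrite IHm; lia.
Qed.

Lemma length_fold_madd n (ef : nat -> list nat) L :
  (forall l, In l L -> length (ef l) = n) -> length (fold_right madd (mzero n) (map ef L)) = n.
Proof.
  induction L; intros H; simpl; [apply length_mzero|].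
  rewrite length_madd, IHL, H; [lia|left; auto|intros; apply H; right; auto].
Qed.

Lemma nth_fold_madd n (ef : nat -> list nat) L i :
  (forall l, In l L -> length (ef l) = n) ->
  nth i (fold_right madd (mzero n) (map ef L)) 0%nat
  = fold_right plus 0%nat (map (fun l => nth i (ef l) 0%nat) L).
Proof.
  induction L; intros H; simpl; [apply nth_mzero|].
  rewrite nth_madd, IHL; auto.
  - intros; apply H; right; auto.
  - rewrite length_fold_madd, H; auto; [left; auto|intros; apply H; right; auto].
Qed.

Lemma fold_madd_mscale_unitidx n a : length a = n ->
  fold_right madd (mzero n) (map (fun l => mscale n (nth l a 0%nat) (unitidx n l)) (seq 0 n))
  = a.
Proof.
  intros La. apply nth_ext with 0%nat 0%nat.
  - rewrite length_fold_madd; auto. intros; apply length_mscale, length_unitidx.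
  - intros i _. rewrite nth_fold_madd by (intros; apply length_mscale, length_unitidx).
    destruct (Nat.ltb_spec i n).
    + rewrite map_ext_in with (g := fun l => if (i =? l)%nat then nth l a 0%nat else 0%nat).
      * rewrite natsum_delta.
        destruct (Nat.leb_spec 0 i), (Nat.ltb_spec i (0 + n)); simpl; auto; lia.
      * intros l _. rewrite nth_mscale, nth_unitidx by apply length_unitidx.
        destruct (Nat.ltb_spec i n); [|lia]. destruct (Nat.eqb_spec i l); lia.
    + rewrite (nth_overflow a) by lia.
      induction (seq 0 n); simpl; auto.
      rewrite IHl, nth_mscale, nth_unitidx by apply length_unitidx.
      destruct (Nat.ltb_spec i n); lia.
Qed.

(** * Truncated products of monomials *)

Definition jet_eq (n r : nat) (p q : Defs.poly) := forall a, In a (multi n r) -> p a = q a.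

Definition monomial (c : R) (e : list nat) : Defs.poly := fun x => if lnat_eqb x e then c else 0.

Lemma in_pmul_support n r g x y :
  In (x, y) (filter (fun ab => lnat_eqb (madd (fst ab) (snd ab)) g)
                    (list_prod (multi n r) (multi n r))) <->
  In x (multi n r) /\ In y (multi n r) /\ madd x y = g.
Proof. rewrite filter_In, in_prod_iff, lnat_eqb_spec. simpl. tauto. Qed.

Lemma NoDup_pmul_support n r g :
  NoDup (filter (fun ab => lnat_eqb (madd (fst ab) (snd ab)) g)
                (list_prod (multi n r) (multi n r))).
Proof. apply NoDup_filter, NoDup_list_prod; apply NoDup_multi. Qed.

Lemma pmul_monomial n r p q c d a b g :
  length a = n -> length b = n ->
  jet_eq n r p (monomial c a) -> jet_eq n r q (monomial d b) ->
  In g (multi n r) -> pmul n r p q g = monomial (c * d) (madd a b) g.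
Proof.
  intros La Lb Hp Hq Hg. unfold pmul.
  destruct (lsum_single _ (fun ab => p (fst ab) * q (snd ab)) (a, b) (NoDup_pmul_support n r g))
    as [I1 I2].
  { intros [x y] H Hne. apply in_pmul_support in H as [H1 [H2 _]]. simpl.
    rewrite Hp, Hq by auto. unfold monomial.
    destruct (lnat_eqb x a) eqn:E1; [|ring]. destruct (lnat_eqb y b) eqn:E2; [|ring].
    apply lnat_eqb_spec in E1, E2. subst; tauto. }
  unfold monomial at 1. destruct (lnat_eqb g (madd a b)) eqn:E.
  - apply lnat_eqb_spec in E. subst g.
    apply in_multi in Hg as [G1 G2]. rewrite msum_madd in G2 by congruence.
    assert (Ha : In a (multi n r)) by (apply in_multi; split; auto; lia).
    assert (Hb : In b (multi n r)) by (apply in_multi; split; auto; lia).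
    rewrite I1 by (apply in_pmul_support; auto). simpl. rewrite Hp, Hq by auto.
    unfold monomial; rewrite !lnat_eqb_refl; ring.
  - apply I2. intro H. apply in_pmul_support in H as [_ [_ H]].
    subst. rewrite lnat_eqb_refl in E; discriminate.
Qed.

Lemma pmul_const_l n r p q c g :
  jet_eq n r p (monomial c (mzero n)) -> In g (multi n r) -> pmul n r p q g = c * q g.
Proof.
  intros Hp Hg. unfold pmul.
  assert (Lg : length g = n) by (apply in_multi in Hg; tauto).
  destruct (lsum_single _ (fun ab => p (fst ab) * q (snd ab)) (mzero n, g)
              (NoDup_pmul_support n r g)) as [I1 _].
  { intros [x y] H Hne. apply in_pmul_support in H as [H1 [H2 H3]]. simpl.
    rewrite Hp by auto. unfold monomial.
    destruct (lnat_eqb x (mzero n)) eqn:E1; [|ring].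
    apply lnat_eqb_spec in E1. subst x. exfalso.
    assert (Ly : length y = n) by (apply in_multi in H2; tauto).
    rewrite <- Ly, madd0m in H3. subst; tauto. }
  rewrite I1; simpl.
  - rewrite Hp by apply mzero_in_multi. unfold monomial; rewrite lnat_eqb_refl; auto.
  - apply in_pmul_support. split; [apply mzero_in_multi|]. split; auto.
    rewrite <- Lg. apply madd0m.
Qed.

Lemma pmul_const_r n r p q c g :
  jet_eq n r q (monomial c (mzero n)) -> In g (multi n r) -> pmul n r p q g = c * p g.
Proof.
  intros Hq Hg. unfold pmul.
  assert (Lg : length g = n) by (apply in_multi in Hg; tauto).
  destruct (lsum_single _ (fun ab => p (fst ab) * q (snd ab)) (g, mzero n)
              (NoDup_pmul_support n r g)) as [I1 _].
  { intros [x y] H Hne. apply in_pmul_support in H as [H1 [H2 H3]]. simpl.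
    rewrite Hq by auto. unfold monomial.
    destruct (lnat_eqb y (mzero n)) eqn:E1; [|ring].
    apply lnat_eqb_spec in E1. subst y. exfalso.
    assert (Lx : length x = n) by (apply in_multi in H1; tauto).
    rewrite <- Lx, maddm0 in H3. subst; tauto. }
  rewrite I1; simpl.
  - rewrite Hq by apply mzero_in_multi. unfold monomial; rewrite lnat_eqb_refl; ring.
  - apply in_pmul_support. split; auto. split; [apply mzero_in_multi|].
    rewrite <- Lg. apply maddm0.
Qed.

Lemma ppow_monomial n r c e m : length e = n ->
  jet_eq n r (ppow n r (monomial c e) m) (monomial (c ^ m) (mscale n m e)).
Proof.
  intros He; induction m; intros a Ha; simpl.
  - apply in_multi in Ha as [La _]. rewrite (pone_mzero n a La). reflexivity.
  - apply pmul_monomial; auto. apply length_mscale; auto. intros x _; auto.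
Qed.

Lemma fold_pmul_monomial n r (h : nat -> Defs.poly) cf ef L :
  (forall l, In l L -> length (ef l) = n) ->
  (forall l, In l L -> jet_eq n r (h l) (monomial (cf l) (ef l))) ->
  jet_eq n r (fold_right (pmul n r) pone (map h L))
    (monomial (fold_right Rmult 1 (map cf L)) (fold_right madd (mzero n) (map ef L))).
Proof.
  induction L; intros H1 H2 x Hx; simpl.
  - apply in_multi in Hx as [Lx _]. apply pone_mzero; auto.
  - apply pmul_monomial; auto.
    + apply H1; left; auto.
    + apply length_fold_madd; intros; apply H1; right; auto.
    + apply H2; left; auto.
    + apply IHL; intros; [apply H1|apply H2]; right; auto.
Qed.

(** * Homotheties *)

Definition homothety (n : nat) (lam : R) : nat -> Defs.poly :=
  fun l => monomial lam (unitidx n l).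

(* lam^|a| written as the product of lam^(a_l): this is the shape in which the
   coefficient arises from the composition [pcomp] *)
Definition homothety_weight (n : nat) (lam : R) (a : list nat) : R :=
  fold_right Rmult 1 (map (fun l => lam ^ (nth l a 0%nat)) (seq 0 n)).

Definition conn_scale (n : nat) (lam : R) (G : conn) : conn :=
  fun k i j a => lam * homothety_weight n lam a * G k i j a.

Lemma pcomp_homothety n r p lam g : In g (multi n r) ->
  pcomp n r p (homothety n lam) g = p g * homothety_weight n lam g.
Proof.
  intros Hg. unfold pcomp.
  assert (Hmon : forall a, In a (multi n r) ->
    jet_eq n r (fold_right (pmul n r) pone
               (map (fun l => ppow n r (homothety n lam l) (nth l a 0%nat)) (seq 0 n)))
      (monomial (homothety_weight n lam a) a)).
  { intros a Ha. apply in_multi in Ha as [La _].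
    unfold homothety_weight. pattern a at 3. rewrite <- (fold_madd_mscale_unitidx n a La).
    apply fold_pmul_monomial.
    - intros; apply length_mscale, length_unitidx.
    - intros l _. apply ppow_monomial, length_unitidx. }
  destruct (lsum_single (multi n r) (fun a => p a * fold_right (pmul n r) pone
             (map (fun l => ppow n r (homothety n lam l) (nth l a 0%nat)) (seq 0 n)) g) g
             (NoDup_multi n r)) as [I1 _].
  { intros a Ha Hne. rewrite (Hmon a Ha g Hg). unfold monomial.
    rewrite lnat_eqb_false by congruence. ring. }
  rewrite I1 by auto. rewrite (Hmon g Hg g Hg). unfold monomial; rewrite lnat_eqb_refl; auto.
Qed.

Lemma pderiv_homothety n r lam l k : (l < n)%nat -> (k < n)%nat ->
  jet_eq n r (pderiv l (homothety n lam k))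
    (monomial (if (l =? k)%nat then lam else 0) (mzero n)).
Proof.
  intros Hl Hk a Ha. apply in_multi in Ha as [La _].
  unfold pderiv, homothety, monomial.
  destruct (lnat_eqb (incr l a) (unitidx n k)) eqn:E.
  - apply lnat_eqb_spec in E. apply incr_eq_unitidx in E as [-> ->]; auto.
    rewrite nth_mzero, Nat.eqb_refl, lnat_eqb_refl. simpl; ring.
  - destruct (lnat_eqb a (mzero n)) eqn:E2; [|destruct (l =? k)%nat; ring].
    apply lnat_eqb_spec in E2; subst a.
    destruct (Nat.eqb_spec l k); [|ring].
    subst. rewrite incr_mzero, lnat_eqb_refl in E; auto. discriminate.
Qed.

Lemma pderiv2_homothety n r lam i j k g : (i < n)%nat -> (j < n)%nat -> (k < n)%nat ->
  In g (multi n r) -> pderiv i (pderiv j (homothety n lam k)) g = 0.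
Proof.
  intros Hi Hj Hk Hg. apply in_multi in Hg as [Lg _].
  unfold pderiv, homothety, monomial.
  rewrite lnat_eqb_false; [ring|]. intro E.
  apply (f_equal msum) in E. rewrite msum_unitidx in E by auto.
  rewrite msum_incr in E by (rewrite length_incr; lia).
  rewrite msum_incr in E by lia. lia.
Qed.

Lemma diff_jet_homothety n lam : lam <> 0 -> diff_jet n (homothety n lam).
Proof.
  intros Hl. split.
  - intros k Hk. unfold homothety, monomial. rewrite lnat_eqb_false; auto.
    intro E. apply (f_equal msum) in E. fold (mzero n) in E.
    rewrite msum_mzero, msum_unitidx in E; auto. discriminate.
  - exists (fun k l => if (k =? l)%nat then / lam else 0).
    intros k j Hk Hj.
    rewrite map_ext_in with
      (g := fun l => if (l =? k)%nat then / lam * homothety n lam l (unitidx n j) else 0).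
    2:{ intros l _. destruct (Nat.eqb_spec k l), (Nat.eqb_spec l k); subst; try lia; ring. }
    rewrite lsum_delta_seq by auto. unfold homothety, monomial.
    destruct (Nat.eqb_spec k j).
    + subst; rewrite lnat_eqb_refl. field; auto.
    + rewrite lnat_eqb_false; [ring|]. intro E.
      apply (f_equal (fun e => nth k e 0%nat)) in E.
      rewrite !nth_unitidx, Nat.eqb_refl in E. destruct (Nat.ltb_spec k n); [|lia].
      destruct (Nat.eqb_spec k j); [lia|discriminate].
Qed.

(* Only the (i, j) term survives on the right-hand side of [act_rel], since the
   differential of a homothety is diagonal and its second derivatives vanish. *)
Lemma act_rel_homothety n r lam G : act_rel n r G (homothety n lam) (conn_scale n lam G).
Proof.
  intros k i j Hk Hi Hj g Hg.
  rewrite (pderiv2_homothety n r) by auto.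
  rewrite map_ext_in with
    (g := fun l => if (l =? k)%nat then lam * conn_scale n lam G l i j g else 0).
  2:{ intros l Hl. apply in_seq in Hl.
      rewrite pmul_const_l with (c := if (l =? k)%nat then lam else 0); auto;
        [destruct (l =? k)%nat; ring|apply pderiv_homothety; lia]. }
  rewrite lsum_delta_seq by auto.
  destruct (lsum_single (list_prod (seq 0 n) (seq 0 n))
    (fun ab : nat * nat =>
       pmul n r (pmul n r (pcomp n r (G k (fst ab) (snd ab)) (homothety n lam))
                          (pderiv i (homothety n lam (fst ab))))
                (pderiv j (homothety n lam (snd ab))) g) (i, j)
    (NoDup_list_prod _ _ (seq_NoDup n 0) (seq_NoDup n 0))) as [I1 _].
  { intros [a b] Hab Hne. apply in_prod_iff in Hab as [Ha Hb]. apply in_seq in Ha, Hb.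
    simpl.
    rewrite pmul_const_r with (c := if (j =? b)%nat then lam else 0); auto;
      [|apply pderiv_homothety; lia].
    rewrite pmul_const_r with (c := if (i =? a)%nat then lam else 0); auto;
      [|apply pderiv_homothety; lia].
    destruct (Nat.eqb_spec j b), (Nat.eqb_spec i a); try ring. subst; tauto. }
  rewrite I1 by (apply in_prod; apply in_seq; lia). simpl.
  rewrite pmul_const_r with (c := if (j =? j)%nat then lam else 0); auto;
    [|apply pderiv_homothety; lia].
  rewrite pmul_const_r with (c := if (i =? i)%nat then lam else 0); auto;
    [|apply pderiv_homothety; lia].
  rewrite pcomp_homothety by auto. rewrite !Nat.eqb_refl. unfold conn_scale. ring.
Qed.

(** * Orbits accumulate at the flat connection *)

Definition conn0 : conn := fun _ _ _ _ => 0.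

Lemma homothety_weight_bounds n lam a : 0 <= lam <= 1 -> 0 <= homothety_weight n lam a <= 1.
Proof.
  intros H. unfold homothety_weight. induction (seq 0 n) as [|l L IH]; simpl; [lra|].
  assert (0 <= lam ^ nth l a 0%nat <= 1).
  { split; [apply pow_le; lra|]. rewrite <- (pow1 (nth l a 0%nat)). apply pow_incr; lra. }
  split; [apply Rmult_le_pos; lra|].
  apply Rle_trans with (1 * 1); [apply Rmult_le_compat; lra|lra].
Qed.

Lemma lsum_nonneg_ge (cs : list coord) (f : coord -> R) c :
  (forall x, 0 <= f x) -> In c cs -> f c <= lsum (map f cs).
Proof.
  intros Hf. assert (Hpos : forall L, 0 <= lsum (map f L)).
  { induction L; simpl; [lra|]. pose proof (Hf a); lra. }
  induction cs; simpl; [tauto|]. intros [->|H].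
  - pose proof (Hpos cs); lra.
  - specialize (IHcs H). pose proof (Hf a); lra.
Qed.

Lemma conn_scale_small n cs G delta : 0 < delta ->
  exists lam, 0 < lam /\ forall c, In c cs -> Rabs (getc (conn_scale n lam G) c) < delta.
Proof.
  intros Hd.
  set (M := lsum (map (fun c => Rabs (getc G c)) cs) + 1).
  assert (HM : 0 < M).
  { pose proof (lsum_nonneg_ge ((0, 0, 0, [])%nat :: cs) (fun c => Rabs (getc G c))
      (0, 0, 0, [])%nat (fun _ => Rabs_pos _) (or_introl eq_refl)) as H.
    simpl in H. unfold M. pose proof (Rabs_pos (G 0%nat 0%nat 0%nat [])); lra. }
  set (lam := Rmin 1 (delta / (2 * M))).
  assert (Hl0 : 0 < lam) by (apply Rmin_pos; [lra|apply Rdiv_lt_0_compat; lra]).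
  assert (Hl1 : lam <= 1) by apply Rmin_l.
  assert (HlM : lam * M <= delta / 2).
  { apply Rle_trans with (delta / (2 * M) * M);
      [apply Rmult_le_compat_r; [lra|apply Rmin_r]|right; field; lra]. }
  exists lam; split; auto.
  intros [[[k i] j] a] Hc. unfold getc, conn_scale.
  pose proof (homothety_weight_bounds n lam a ltac:(lra)).
  assert (HG : Rabs (G k i j a) <= M).
  { pose proof (lsum_nonneg_ge cs (fun c => Rabs (getc G c)) (k, i, j, a)
      (fun _ => Rabs_pos _) Hc). unfold M; simpl in *; lra. }
  rewrite !Rabs_mult, (Rabs_right lam), (Rabs_right (homothety_weight n lam a)) by lra.
  pose proof (Rabs_pos (G k i j a)).
  assert (lam * homothety_weight n lam a * Rabs (G k i j a) <= lam * 1 * M).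
  { apply Rmult_le_compat; try lra; [apply Rmult_le_pos; lra|apply Rmult_le_compat_l; lra]. }
  lra.
Qed.

Lemma contc_eq_of_adherent cs F G G0 : contc cs F ->
  (forall delta, 0 < delta -> exists G', F G' = F G /\
     forall c, In c cs -> Rabs (getc G' c - getc G0 c) < delta) ->
  F G = F G0.
Proof.
  intros Hc Hadh.
  destruct (Req_dec (F G) (F G0)) as [E|Ne]; auto. exfalso.
  assert (Heps : 0 < Rabs (F G - F G0)) by (apply Rabs_pos_lt; lra).
  destruct (Hc G0 _ Heps) as [delta [Hd Hdel]].
  destruct (Hadh delta Hd) as [G' [HG' Hclose]].
  specialize (Hdel G' Hclose). rewrite HG' in Hdel. lra.
Qed.

Lemma scale_invariant_eq_conn0 n cs F G : contc cs F ->
  (forall lam, 0 < lam -> F (conn_scale n lam G) = F G) -> F G = F conn0.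
Proof.
  intros Hc Hinv. apply (contc_eq_of_adherent cs); auto.
  intros delta Hd. destruct (conn_scale_small n cs G delta Hd) as [lam [Hl Hsmall]].
  exists (conn_scale n lam G). split; auto.
  intros c Hin. unfold conn0. destruct c as [[[k i] j] a]. simpl.
  rewrite Rminus_0_r. exact (Hsmall _ Hin).
Qed.

Theorem mainTheorem9 (n r : nat) (hn : (1 <= n)%nat) :
  (forall F : conn -> R,
     smooth (conn_coords n r) F -> invariant n r F ->
     forall G1 G2 : conn, F G1 = F G2) /\
  (forall F : conn -> R,
     smooth (sym_coords n r) F -> sym_invariant n r F ->
     forall G1 G2 : conn, is_sym G1 -> is_sym G2 -> F G1 = F G2).
Proof.
  split.
  - intros F Hs Hi G1 G2.
    assert (Hc : contc (conn_coords n r) F) by apply (proj1 (proj2 (Hs 0%nat))).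
    assert (K : forall G, F G = F conn0).
    { intros G. apply (scale_invariant_eq_conn0 n (conn_coords n r)); auto.
      intros lam Hl. apply (Hi G (homothety n lam));
        [apply diff_jet_homothety; lra|apply act_rel_homothety]. }
    rewrite (K G1), (K G2); auto.
  - intros F Hs Hi G1 G2 S1 S2.
    assert (Hc : contc (sym_coords n r) F) by apply (proj1 (proj2 (Hs 0%nat))).
    assert (K : forall G, is_sym G -> F G = F conn0).
    { intros G SG. apply (scale_invariant_eq_conn0 n (sym_coords n r)); auto.
      intros lam Hl. apply (Hi G (homothety n lam)); auto;
        [apply diff_jet_homothety; lra|apply act_rel_homothety]. }
    rewrite (K G1), (K G2); auto.
Qed.
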